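(* Let $\{x,\xi\}$ be a line congruence, where $x:U\to\mathbb{R}^3$ is smooth, $U\subset\mathbb{R}^2$ open, and $\xi:U\to S^2$ is a proper frontal. Let $\Omega=(w_1\ w_2)$ be a tangent moving basis of $\xi$ and write $D\xi=\Omega\Delta_\Omega^T$ with $\Delta_\Omega=(\delta_{ij})$. \begin{enumerate} \item A curve $(u_1(t),u_2(t))$ in $U$ is a Kummer principal line if and only if it is a solution of \[ C_1 b_1^2 + C_2 b_1 b_2 + C_3 b_2^2 = 0 \quad\text{for all } t, \] where $\begin{pmatrix} b_1\\ b_2\end{pmatrix}=\Delta_\Omega^T\begin{pmatrix} u_1'\\ u_2'\end{pmatrix}$ and \begin{align*} C_1 &= 2\mathscr{F}_\Omega(\delta_{22}\mathscr{L}_\Omega-\delta_{12}\mathscr{M}_{1\Omega}) - \mathscr{E}_\Omega(\delta_{11}\mathscr{M}_{1\Omega}-\delta_{21}\mathscr{L}_\Omega+\delta_{22}\mathscr{M}_{2\Omega}-\delta_{12}\mathscr{N}_\Omega),\\ C_2 &= 2\mathscr{G}_\Omega(\delta_{22}\mathscr{L}_\Omega-\delta_{12}\mathscr{M}_{1\Omega}) - 2\mathscr{E}_\Omega(\delta_{11}\mathscr{N}_\Omega-\delta_{21}\mathscr{M}_{2\Omega}),\\ C_3 &= \mathscr{G}_\Omega(\delta_{11}\mathscr{M}_{1\Omega}-\delta_{21}\mathscr{L}_\Omega+\delta_{22}\mathscr{M}_{2\Omega}-\delta_{12}\mathscr{N}_\Omega) - 2\mathscr{F}_\Omega(\delta_{11}\mathscr{N}_\Omega-\delta_{21}\mathscr{M}_{2\Omega}).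 \end{align*} This equation is called the equation of principal surfaces of the congruence. \item If the congruence is normal, then the equation of principal surfaces can be written as \[ \begin{pmatrix} u_1' & u_2'\end{pmatrix}\Delta_\Omega\,\mathbf{P}\,\mathrm{adj}(\bm{\mathcal{II}}_\Omega)^T\Delta_\Omega\bm{\mathcal{I}}_\Omega\Delta_\Omega^T\begin{pmatrix} u_1'\\ u_2'\end{pmatrix}=0,\qquad \mathbf{P}=\begin{pmatrix}0&1\\-1&0\end{pmatrix}. \] \end{enumerate}
   Context: A frontal is a smooth map $\xi:U\to\mathbb{R}^3$ admitting locally a unit normal vector field; it is proper if its singular set $\Sigma(\xi)$ has empty interior. A tangent moving basis of $\xi$ is a smooth map $\Omega=(w_1\ w_2):U\to M_{3\times2}(\mathbb{R})$ with linearly independent columns such that $\xi_{u_1},\xi_{u_2}\in\mathrm{span}(w_1,w_2)=P_\Omega$; then $D\xi=\Omega\Delta_\Omega^T$ for a unique $\Delta_\Omega:U\to M_{2\times2}(\mathbb{R})$. The $\Omega$-Kummer fundamental forms have coefficients $\mathscr{E}_\Omega=\langle w_1,w_1\rangle$, $\mathscr{F}_\Omega=\langle w_1,w_2\rangle$, $\mathscr{G}_\Omega=\langle w_2,w_2\rangle$ (matrix $\bm{\mathcal{I}}_\Omega=\Omega^T\Omega$), and $\mathscr{L}_\Omega=-\langle x_{u_1},w_1\rangle$, $\mathscr{M}_{2\Omega}=-\langle x_{u_1},w_2\rangle$, $\mathscr{M}_{1\Omega}=-\langle x_{u_2},w_1\rangle$, $\mathscr{N}_\Omega=-\langle x_{u_2},w_2\rangle$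 (matrix $\bm{\mathcal{II}}_\Omega=-\Omega^TDx$). For $q\in U$ define $\mathscr{K}_q^\Omega(b_1,b_2)=\dfrac{b^T\bm{\mathcal{II}}_\Omega\,\mathrm{adj}(\Delta_\Omega^T)b}{b^T\bm{\mathcal{I}}_\Omega b}$, $b=(b_1,b_2)^T$, $\mathrm{adj}$ the adjugate matrix. A direction $b_1w_1+b_2w_2\in P_\Omega$ is a Kummer principal direction if $\mathscr{K}_q^\Omega(b_1,b_2)$ is an extreme value of $\mathscr{K}_q^\Omega$. For a smooth curve $\alpha(t)=(u_1(t),u_2(t))$ in $U$, the ruled surface $Y(t,v)=x(\alpha(t))+v\xi(\alpha(t))$ is a principal surface if for every $t$ with $(b_1,b_2)^T=\Delta_\Omega^T(u_1',u_2')^T\neq 0$, $(b_1,b_2)$ determines a Kummer principal direction; $\alpha$ (or the directrix curve) is then called a Kummer principal line. The congruence is normal if there is a surface whose normal lines are parallel to the lines of the congruence; equivalently, $\bm{\mathcal{II}}_\Omega\,\mathrm{adj}(\Delta_\Omega^T)$ is symmetric. *)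

From HB Require Import structures.
From mathcomp Require Import all_boot all_order all_algebra.
From mathcomp Require Import all_classical all_reals all_analysis.
Set Implicit Arguments. Unset Strict Implicit. Unset Printing Implicit Defensive.
Import Order.TTheory GRing.Theory Num.Theory.
Import numFieldNormedType.Exports.
Local Open Scope classical_set_scope.
Local Open Scope ring_scope.

Section KummerDefs.
Variable R : realType.

Definition evec (i : 'I_2) : 'rV[R]_2 := delta_mx 0 i.

(* partial derivative with respect to u_{i+1} *)
Definition partial {V : normedModType R} (i : 'I_2) (f : 'rV[R]_2 -> V)
  : 'rV[R]_2 -> V := fun p => derive f p (evec i).

Definition iter_partial {V : normedModType R} (s : seq 'I_2) (f : 'rV[R]_2 -> V)
  : 'rV[R]_2 -> V := foldr (@partial V) f s.

Definition smooth_on {V : normedModType R} (U : set 'rV[R]_2) (f : 'rV[R]_2 -> V)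
  : Prop :=
  forall (s : seq 'I_2) (p : 'rV[R]_2), U p ->
    {for p, continuous (iter_partial s f)} /\
    forall i, derivable (iter_partial s f) p (evec i).

Definition smooth_curve_on {V : normedModType R} (I : set R) (a : R -> V) : Prop :=
  forall (k : nat) (t : R), I t ->
    {for t, continuous (iter k (@derive1 R V) a)} /\
    derivable (iter k (@derive1 R V) a) t 1.

Definition jac (f : 'rV[R]_2 -> 'cV[R]_3) (p : 'rV[R]_2) : 'M[R]_(3, 2) :=
  \matrix_(k < 3, j < 2) partial j f p k 0.

Definition dot (u v : 'cV[R]_3) : R := (u^T *m v) 0 0.

Definition singular_set (U : set 'rV[R]_2) (xi : 'rV[R]_2 -> 'cV[R]_3) :=
  [set p | U p /\ (\rank (jac xi p) < 2)%N].

Definition frontal (U : set 'rV[R]_2) (xi : 'rV[R]_2 -> 'cV[R]_3) : Prop :=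
  smooth_on U xi /\
  forall p, U p -> exists V : set 'rV[R]_2, [/\ open V, V p, V `<=` U &
    exists nu : 'rV[R]_2 -> 'cV[R]_3, smooth_on V nu /\
      forall q, V q -> dot (nu q) (nu q) = 1 /\
        forall i, dot (nu q) (partial i xi q) = 0].

Definition proper_frontal (U : set 'rV[R]_2) (xi : 'rV[R]_2 -> 'cV[R]_3) : Prop :=
  frontal U xi /\ interior (singular_set U xi) = set0.

Definition tangent_moving_basis (U : set 'rV[R]_2) (xi : 'rV[R]_2 -> 'cV[R]_3)
  (Om : 'rV[R]_2 -> 'M[R]_(3, 2)) : Prop :=
  smooth_on U Om /\
  forall p, U p -> \rank (Om p) = 2%N /\
    forall i : 'I_2, ((col i (jac xi p))^T <= (Om p)^T)%MS.

Definition w1 (Om : 'rV[R]_2 -> 'M[R]_(3, 2)) p : 'cV[R]_3 := col 0 (Om p).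
Definition w2 (Om : 'rV[R]_2 -> 'M[R]_(3, 2)) p : 'cV[R]_3 := col 1 (Om p).

Definition KE Om p := dot (w1 Om p) (w1 Om p).
Definition KF Om p := dot (w1 Om p) (w2 Om p).
Definition KG Om p := dot (w2 Om p) (w2 Om p).
Definition KL Om (x : 'rV[R]_2 -> 'cV[R]_3) p := - dot (partial 0 x p) (w1 Om p).
Definition KM2 Om (x : 'rV[R]_2 -> 'cV[R]_3) p := - dot (partial 0 x p) (w2 Om p).
Definition KM1 Om (x : 'rV[R]_2 -> 'cV[R]_3) p := - dot (partial 1 x p) (w1 Om p).
Definition KN Om (x : 'rV[R]_2 -> 'cV[R]_3) p := - dot (partial 1 x p) (w2 Om p).

Definition Iform (Om : 'rV[R]_2 -> 'M[R]_(3, 2)) p : 'M[R]_2 := (Om p)^T *m Om p.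
Definition IIform (Om : 'rV[R]_2 -> 'M[R]_(3, 2)) (x : 'rV[R]_2 -> 'cV[R]_3) p
  : 'M[R]_2 := - ((Om p)^T *m jac x p).

Definition Kq Om x (Dl : 'rV[R]_2 -> 'M[R]_2) p (b : 'cV[R]_2) : R :=
  (b^T *m IIform Om x p *m \adj ((Dl p)^T) *m b) 0 0 / (b^T *m Iform Om p *m b) 0 0.

(* b1 w1 + b2 w2 is a Kummer principal direction at p: Kq(b) is an extreme
   value of Kq (on nonzero b) *)
Definition kummer_principal_direction Om x Dl p (b : 'cV[R]_2) : Prop :=
  b != 0 /\
  ((forall c : 'cV[R]_2, c != 0 -> Kq Om x Dl p c <= Kq Om x Dl p b) \/
   (forall c : 'cV[R]_2, c != 0 -> Kq Om x Dl p b <= Kq Om x Dl p c)).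

Definition bvec (Dl : 'rV[R]_2 -> 'M[R]_2) (a : R -> 'rV[R]_2) (t : R) : 'cV[R]_2 :=
  (Dl (a t))^T *m (derive1 a t)^T.

(* Y(t,v) = x(a t) + v xi(a t) is a principal surface, i.e. a is a Kummer
   principal line *)
Definition kummer_principal_line (I : set R) Om x Dl (a : R -> 'rV[R]_2) : Prop :=
  forall t, I t -> bvec Dl a t != 0 ->
    kummer_principal_direction Om x Dl (a t) (bvec Dl a t).

Definition C1 Om x (Dl : 'rV[R]_2 -> 'M[R]_2) p : R :=
  let d := Dl p in
  2 * KF Om p * (d 1 1 * KL Om x p - d 0 1 * KM1 Om x p)
  - KE Om p * (d 0 0 * KM1 Om x p - d 1 0 * KL Om x p
               + d 1 1 * KM2 Om x p - d 0 1 * KN Om x p).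
Definition C2 Om x (Dl : 'rV[R]_2 -> 'M[R]_2) p : R :=
  let d := Dl p in
  2 * KG Om p * (d 1 1 * KL Om x p - d 0 1 * KM1 Om x p)
  - 2 * KE Om p * (d 0 0 * KN Om x p - d 1 0 * KM2 Om x p).
Definition C3 Om x (Dl : 'rV[R]_2 -> 'M[R]_2) p : R :=
  let d := Dl p in
  KG Om p * (d 0 0 * KM1 Om x p - d 1 0 * KL Om x p
             + d 1 1 * KM2 Om x p - d 0 1 * KN Om x p)
  - 2 * KF Om p * (d 0 0 * KN Om x p - d 1 0 * KM2 Om x p).

Definition principal_eq Om x Dl (a : R -> 'rV[R]_2) t : R :=
  let b := bvec Dl a t in
  C1 Om x Dl (a t) * b 0 0 ^+ 2 + C2 Om x Dl (a t) * b 0 0 * b 1 0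
  + C3 Om x Dl (a t) * b 1 0 ^+ 2.

Definition normal_congruence (U : set 'rV[R]_2) Om x (Dl : 'rV[R]_2 -> 'M[R]_2) : Prop :=
  forall p, U p ->
    (IIform Om x p *m \adj ((Dl p)^T))^T = IIform Om x p *m \adj ((Dl p)^T).

Definition Pmx : 'M[R]_2 :=
  \matrix_(i < 2, j < 2)
    (if ((i : nat) == 0%N) && ((j : nat) == 1%N) then 1
     else if ((i : nat) == 1%N) && ((j : nat) == 0%N) then -1 else 0).

Definition principal_eq_normal Om x (Dl : 'rV[R]_2 -> 'M[R]_2) (a : R -> 'rV[R]_2) t : R :=
  let p := a t in
  (derive1 a t *m Dl p *m Pmx *m (\adj (IIform Om x p))^T *m Dl p *m Iform Om p
     *m (Dl p)^T *m (derive1 a t)^T) 0 0.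

End KummerDefs.

From HB Require Import structures.
From mathcomp Require Import all_boot all_order all_algebra.
From mathcomp Require Import all_classical all_reals all_analysis.
From mathcomp Require Import ring lra.
Set Implicit Arguments. Unset Strict Implicit. Unset Printing Implicit Defensive.
Import Order.TTheory GRing.Theory Num.Theory.
Import numFieldNormedType.Exports.
Local Open Scope classical_set_scope.
Local Open Scope ring_scope.

(* K_q is the quotient Q/I of two binary quadratic forms in b, where Q has
   the symmetrised matrix of II adj(Delta^T) and I = Omega^T Omega is positive
   definite because Omega has rank 2.  With l = K_q(b), b is extremal iff
   Q - l I is semidefinite.  As Q - l I vanishes at b, semidefiniteness forces
   (Q - l I) b = 0, i.e. the Jacobian of Q and I vanishes at b.  Conversely, if
   the Jacobian vanishes then (Q - l I) b = 0, so Q - l I is singular, and a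
   singular symmetric 2x2 matrix is semidefinite.  The equation of principal
   surfaces is twice this Jacobian; the second equation is the Jacobian plus
   the skew part of II adj(Delta^T) times I(b, b), which vanishes for normal
   congruences.  Everything is pointwise algebra: of the hypotheses, only the
   rank of Omega along the curve is used. *)

Section BinaryQuadraticFormIdentities.
Variable R : comNzRingType.
Implicit Types a b c e f g l s x y : R.

(* the binary form with symmetric matrix [[a, b], [b, c]] *)
Definition qform a b c x y := a * x ^+ 2 + 2 * b * x * y + c * y ^+ 2.

(* a quarter of the Jacobian determinant d(Q, P)/d(x, y) of the two forms *)
Definition qform_jacobian a b c e f g x y :=
  (a * x + b * y) * (f * x + g * y) - (b * x + c * y) * (e * x + f * y).

Lemma qform0 a b c : qform a b c 0 0 = 0.
Proof. by rewrite /qform; ring. Qed.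

Lemma qform_swap a b c x y : qform a b c x y = qform c b a y x.
Proof. by rewrite /qform; ring. Qed.

Lemma qformN a b c x y : qform (- a) (- b) (- c) x y = - qform a b c x y.
Proof. by rewrite /qform; ring. Qed.

Lemma qformDl a b c x y s :
  qform a b c (x + s) y = qform a b c x y + 2 * (a * x + b * y) * s + a * s ^+ 2.
Proof. by rewrite /qform; ring. Qed.

Lemma qform_shift a b c e f g l x y :
  qform (a - l * e) (b - l * f) (c - l * g) x y
  = qform a b c x y - l * qform e f g x y.
Proof. by rewrite /qform; ring. Qed.

Lemma qform_jacobian_shift a b c e f g l x y :
  qform_jacobian (a - l * e) (b - l * f) (c - l * g) e f g x y
  = qform_jacobian a b c e f g x y.
Proof. by rewrite /qform_jacobian; ring. Qed.

Lemma qform_jacobian0 a b c e f g : qform_jacobian a b c e f g 0 0 = 0.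
Proof. by rewrite /qform_jacobian; ring. Qed.

End BinaryQuadraticFormIdentities.

Section BinaryQuadraticForms.
Variable R : realFieldType.
Implicit Types a b c e f g x y : R.

Definition qform_semidef a b c :=
  (forall x y, 0 <= qform a b c x y) \/ (forall x y, qform a b c x y <= 0).

Lemma linear_quadratic_ge0_eq0 a b : (forall s, 0 <= a * s + b * s ^+ 2) -> a = 0.
Proof.
move=> ge0; pose k := 1 + b ^+ 2.
have k_gt0 : 0 < k by rewrite /k; have := sqr_ge0 b; lra.
have : 0 <= a ^+ 2 * (b - k) / k ^+ 2.
  by rewrite (_ : _ / _ = a * (- a / k) + b * (- a / k) ^+ 2) //; field; rewrite gt_eqF.
rewrite pmulr_lge0 ?invr_gt0 ?exprn_gt0 // => sa_ge0.
have : a ^+ 2 <= 0 by rewrite /k in sa_ge0; nra.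
by move=> sa_le0; apply/eqP; rewrite -sqrf_eq0 eq_le sa_le0 sqr_ge0.
Qed.

Lemma qform_ge0_kernel a b c x y : (forall u v, 0 <= qform a b c u v) ->
  qform a b c x y = 0 -> a * x + b * y = 0 /\ b * x + c * y = 0.
Proof.
have row0 a' b' c' x' y' : (forall u v, 0 <= qform a' b' c' u v) ->
    qform a' b' c' x' y' = 0 -> a' * x' + b' * y' = 0.
  move=> q_ge0 q0; suff /eqP : 2 * (a' * x' + b' * y') = 0.
    by rewrite mulf_eq0 pnatr_eq0 => /eqP.
  apply: (@linear_quadratic_ge0_eq0 _ a') => s.
  by have := q_ge0 (x' + s) y'; rewrite qformDl q0 add0r.
move=> q_ge0 q0; split; first exact: row0 q_ge0 q0.
rewrite addrC; apply: (row0 c b a y x) => [u v|]; by rewrite -qform_swap.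
Qed.

Lemma qform_semidef_kernel a b c x y : qform_semidef a b c ->
  qform a b c x y = 0 -> a * x + b * y = 0 /\ b * x + c * y = 0.
Proof.
case=> [q_ge0 q0|q_le0 q0]; first exact: qform_ge0_kernel.
have [] := @qform_ge0_kernel (- a) (- b) (- c) x y.
- by move=> u v; rewrite qformN oppr_ge0.
- by rewrite qformN q0 oppr0.
by rewrite !mulNr -!opprD => /eqP; rewrite oppr_eq0 => /eqP -> /eqP;
  rewrite oppr_eq0 => /eqP.
Qed.

Lemma qform_kernel_det a b c x y : (x != 0) || (y != 0) ->
  a * x + b * y = 0 -> b * x + c * y = 0 -> a * c = b ^+ 2.
Proof.
move=> xy_neq0 row0 row1; apply/eqP; rewrite -subr_eq0.
have detx : (a * c - b ^+ 2) * x = c * (a * x + b * y) - b * (b * x + c * y).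
  by ring.
have dety : (a * c - b ^+ 2) * y = a * (b * x + c * y) - b * (a * x + b * y).
  by ring.
case/orP: xy_neq0 => [x_neq0|y_neq0].
- by move: detx; rewrite row0 row1 !mulr0 subr0 => /eqP; rewrite mulf_eq0 (negbTE x_neq0) orbF.
- by move: dety; rewrite row0 row1 !mulr0 subr0 => /eqP; rewrite mulf_eq0 (negbTE y_neq0) orbF.
Qed.

Lemma qform_det0_semidef a b c : a * c = b ^+ 2 -> qform_semidef a b c.
Proof.
move=> det0.
have sos x y : (a + c) * qform a b c x y = (a * x + b * y) ^+ 2 + (b * x + c * y) ^+ 2.
  have : (a * c - b ^+ 2) * (x ^+ 2 + y ^+ 2) = 0 by rewrite det0 subrr mul0r.
  by move=> det0_xy; rewrite -[RHS]addr0 -det0_xy /qform; ring.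
have tr_q_ge0 x y : 0 <= (a + c) * qform a b c x y.
  by rewrite sos addr_ge0 ?sqr_ge0.
case: (ltrgtP 0 (a + c)) => [tr_gt0|tr_lt0|tr0].
- by left=> x y; rewrite -(pmulr_rge0 _ tr_gt0).
- by right=> x y; rewrite -(nmulr_rge0 _ tr_lt0).
have c_def : c = - a by apply/eqP; rewrite -addr_eq0 addrC -tr0.
have /eqP : a ^+ 2 + b ^+ 2 = 0 by rewrite -det0 c_def; ring.
rewrite paddr_eq0 ?sqr_ge0 // !sqrf_eq0 => /andP[/eqP a0 /eqP b0].
by left=> x y; rewrite c_def a0 b0 /qform; lra.
Qed.

Lemma qform_jacobian_kernel a b c e f g x y :
  qform a b c x y = 0 -> 0 < qform e f g x y ->
  qform_jacobian a b c e f g x y = 0 -> a * x + b * y = 0 /\ b * x + c * y = 0.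
Proof.
move=> q0 /gt_eqF p_neq0 jac0.
have row0 : (a * x + b * y) * qform e f g x y
    = (e * x + f * y) * qform a b c x y + y * qform_jacobian a b c e f g x y.
  by rewrite /qform /qform_jacobian; ring.
have row1 : (b * x + c * y) * qform e f g x y
    = (f * x + g * y) * qform a b c x y - x * qform_jacobian a b c e f g x y.
  by rewrite /qform /qform_jacobian; ring.
move: row0 row1; rewrite q0 jac0 !mulr0 addr0 subr0.
by move=> /eqP; rewrite mulf_eq0 p_neq0 orbF => /eqP -> /eqP;
  rewrite mulf_eq0 p_neq0 orbF => /eqP.
Qed.

Lemma forall_nonzero2 (P : R -> R -> Prop) : P 0 0 ->
  (forall x y, (x != 0) || (y != 0) -> P x y) -> forall x y, P x y.
Proof.
move=> P00 P_nz x y; have [xy0|/norP[/negbNE/eqP-> /negbNE/eqP->] //] :=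
  boolP ((x != 0) || (y != 0)).
exact: P_nz.
Qed.

Lemma qform_ratio_extremal_iff a b c e f g x y :
  (forall u v, (u != 0) || (v != 0) -> 0 < qform e f g u v) ->
  (x != 0) || (y != 0) ->
  ((forall u v, (u != 0) || (v != 0) ->
      qform a b c u v / qform e f g u v <= qform a b c x y / qform e f g x y) \/
   (forall u v, (u != 0) || (v != 0) ->
      qform a b c x y / qform e f g x y <= qform a b c u v / qform e f g u v))
  <-> qform_jacobian a b c e f g x y = 0.
Proof.
move=> p_posdef xy_neq0; set l := qform a b c x y / qform e f g x y.
have p_gt0 := p_posdef x y xy_neq0.
have q0 : qform (a - l * e) (b - l * f) (c - l * g) x y = 0.
  by rewrite qform_shift /l divfK ?subrr ?gt_eqF.
have extremal_semidef : ((forall u v, (u != 0) || (v != 0) ->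
        qform a b c u v / qform e f g u v <= l) \/
      (forall u v, (u != 0) || (v != 0) ->
        l <= qform a b c u v / qform e f g u v))
    <-> qform_semidef (a - l * e) (b - l * f) (c - l * g).
  have [le_l ge_l] : (forall u v, (u != 0) || (v != 0) ->
        (qform a b c u v / qform e f g u v <= l)
        = (qform (a - l * e) (b - l * f) (c - l * g) u v <= 0)) /\
      (forall u v, (u != 0) || (v != 0) ->
        (l <= qform a b c u v / qform e f g u v)
        = (0 <= qform (a - l * e) (b - l * f) (c - l * g) u v)).
    split=> u v uv_neq0; rewrite qform_shift.
    - by rewrite ler_pdivrMr ?p_posdef // subr_le0.
    - by rewrite ler_pdivlMr ?p_posdef // subr_ge0.
  split=> [[max|min]|[q_ge0|q_le0]].
  - by right; apply: forall_nonzero2 => [|u v uv]; rewrite ?qform0 // -le_l ?max.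
  - by left; apply: forall_nonzero2 => [|u v uv]; rewrite ?qform0 // -ge_l ?min.
  - by right=> u v uv; rewrite ge_l.
  - by left=> u v uv; rewrite le_l.
rewrite extremal_semidef -(qform_jacobian_shift _ _ _ _ _ _ l); split.
- move=> /qform_semidef_kernel /(_ q0) [row0 row1].
  by rewrite /qform_jacobian row0 row1 !mul0r subrr.
- move=> /(qform_jacobian_kernel q0 p_gt0) [row0 row1].
  exact/qform_det0_semidef/(qform_kernel_det xy_neq0 row0 row1).
Qed.

End BinaryQuadraticForms.

Section TwoByTwoMatrices.

Lemma mulmx2E (R : comNzRingType) m n (A : 'M[R]_(m, 2)) (B : 'M[R]_(2, n)) i j :
  (A *m B) i j = A i 0 * B 0 j + A i 1 * B 1 j.
Proof.
by rewrite mxE big_ord_recr big_ord1; congr (A i _ * B _ j + A i _ * B _ j);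
  apply: val_inj.
Qed.

Lemma adj_mx2 (R : comNzRingType) (A : 'M[R]_2) : \adj A = \matrix_(i, j)
  (if i == 0 then if j == 0 then A 1 1 else - A 0 1
   else if j == 0 then - A 1 0 else A 0 0).
Proof.
apply/matrixP => i j; rewrite !mxE /cofactor det_mx11 !mxE.
case: i => [[|[|//]] ?]; case: j => [[|[|//]] ?] /=.
all: rewrite ?exprD ?expr1 ?mulrNN ?mul1r ?mulN1r ?opprK.
all: by first [congr (A _ _) | congr (- A _ _)]; apply: val_inj.
Qed.

Variable R : realFieldType.

Lemma mx2_qformE (A : 'M[R]_2) (c : 'cV[R]_2) : (c^T *m A *m c) 0 0
  = qform (A 0 0) ((A 0 1 + A 1 0) / 2) (A 1 1) (c 0 0) (c 1 0).
Proof. by rewrite !mulmx2E !mxE /qform; field. Qed.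

Lemma mx2_qform_sym (A : 'M[R]_2) (c : 'cV[R]_2) : A 1 0 = A 0 1 ->
  (c^T *m A *m c) 0 0 = qform (A 0 0) (A 0 1) (A 1 1) (c 0 0) (c 1 0).
Proof. by move=> A_sym; rewrite !mulmx2E !mxE A_sym /qform; ring. Qed.

Lemma cV2_neq0 (c : 'cV[R]_2) : (c != 0) = (c 0 0 != 0) || (c 1 0 != 0).
Proof.
rewrite -negb_and; congr (~~ _); apply/eqP/andP => [-> | [/eqP c0 /eqP c1]].
  by rewrite !mxE.
by apply/matrixP => -[[|[|//]] i] j; rewrite (ord1 j) mxE;
  [rewrite -c0 | rewrite -c1]; congr (c _ _); apply: val_inj.
Qed.

Lemma forall_cV2_neq0 (P : R -> R -> Prop) :
  (forall c : 'cV[R]_2, c != 0 -> P (c 0 0) (c 1 0)) <->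
  (forall x y, (x != 0) || (y != 0) -> P x y).
Proof.
split=> [P_nz x y xy_neq0 | P_nz c]; last by rewrite cV2_neq0; apply: P_nz.
have := P_nz (\col_i [:: x; y]`_i); rewrite !mxE; apply.
by rewrite cV2_neq0 !mxE.
Qed.

Lemma gram_qform_gt0 m n (M : 'M[R]_(m, n)) (c : 'cV[R]_n) :
  \rank M = n -> c != 0 -> 0 < (c^T *m (M^T *m M) *m c) 0 0.
Proof.
move=> M_rank c_neq0; set v := M *m c.
have -> : c^T *m (M^T *m M) *m c = v^T *m v by rewrite trmx_mul !mulmxA.
have v_neq0 : v != 0.
  apply: contra c_neq0 => /eqP Mc0.
  have Mtr_free : row_free M^T by rewrite /row_free mxrank_tr M_rank.
  apply/eqP; rewrite -[c]trmxK -[0]trmx0; congr _^T; apply: (row_free_inj Mtr_free).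
  by rewrite -trmx_mul -/v Mc0 trmx0 mul0mx.
have -> : (v^T *m v) 0 0 = \sum_i v i 0 ^+ 2.
  by rewrite mxE; apply: eq_bigr => i _; rewrite mxE expr2.
rewrite lt_def sumr_ge0 ?andbT => [|i _]; last exact: sqr_ge0.
rewrite psumr_eq0 => [|i _]; last exact: sqr_ge0.
apply: contra v_neq0 => /allP v_eq0; apply/eqP/matrixP => i j.
by rewrite (ord1 j) [RHS]mxE; apply/eqP; rewrite -sqrf_eq0; apply: v_eq0 (mem_index_enum i).
Qed.

End TwoByTwoMatrices.

Section KummerForms.
Variables (R : realType) (Om : 'rV[R]_2 -> 'M[R]_(3, 2)) (x : 'rV[R]_2 -> 'cV[R]_3)
  (Dl : 'rV[R]_2 -> 'M[R]_2).

Definition kummer_mx p : 'M[R]_2 := IIform Om x p *m \adj (Dl p)^T.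

Definition principal_jacobian p (b : 'cV[R]_2) : R :=
  let A := kummer_mx p in let I := Iform Om p in
  qform_jacobian (A 0 0) ((A 0 1 + A 1 0) / 2) (A 1 1) (I 0 0) (I 0 1) (I 1 1)
    (b 0 0) (b 1 0).

Lemma principal_jacobian0 p : principal_jacobian p 0 = 0.
Proof. by rewrite /principal_jacobian !mxE qform_jacobian0. Qed.

Lemma Iform_entry p i j : Iform Om p i j = dot (col i (Om p)) (col j (Om p)).
Proof. by rewrite /Iform /dot !mxE; apply: eq_bigr => k _; rewrite !mxE. Qed.

Lemma IIform_entry p i j : IIform Om x p i j = - dot (partial j x p) (col i (Om p)).
Proof. by rewrite /IIform /dot /jac !mxE; congr (- _); apply: eq_bigr => k _; rewrite !mxE mulrC. Qed.

Lemma Iform_sym p : Iform Om p 1 0 = Iform Om p 0 1.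
Proof. by rewrite /Iform !mxE; apply: eq_bigr => k _; rewrite !mxE mulrC. Qed.

Lemma Iform_qform_gt0 p : \rank (Om p) = 2%N -> forall u v, (u != 0) || (v != 0) ->
  0 < qform (Iform Om p 0 0) (Iform Om p 0 1) (Iform Om p 1 1) u v.
Proof.
move=> Om_rank; apply/forall_cV2_neq0 => c c_neq0.
have := gram_qform_gt0 Om_rank c_neq0.
by rewrite mx2_qform_sym // Iform_sym.
Qed.

Lemma Kq_qform p c : Kq Om x Dl p c =
  let A := kummer_mx p in let I := Iform Om p in
  qform (A 0 0) ((A 0 1 + A 1 0) / 2) (A 1 1) (c 0 0) (c 1 0)
  / qform (I 0 0) (I 0 1) (I 1 1) (c 0 0) (c 1 0).
Proof.
by rewrite /Kq -mx2_qformE (mx2_qform_sym _ (Iform_sym p)) /kummer_mx !mulmxA.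
Qed.

Lemma kummer_principal_direction_iff p b : \rank (Om p) = 2%N -> b != 0 ->
  kummer_principal_direction Om x Dl p b <-> principal_jacobian p b = 0.
Proof.
move=> Om_rank b_neq0; set A := kummer_mx p; set I := Iform Om p.
pose r u v := qform (A 0 0) ((A 0 1 + A 1 0) / 2) (A 1 1) u v
  / qform (I 0 0) (I 0 1) (I 1 1) u v.
have KqE c : Kq Om x Dl p c = r (c 0 0) (c 1 0) by rewrite Kq_qform.
have b_nz : (b 0 0 != 0) || (b 1 0 != 0) by rewrite -cV2_neq0.
rewrite /principal_jacobian -/A -/I.
rewrite -(qform_ratio_extremal_iff _ _ _ (Iform_qform_gt0 Om_rank) b_nz).
split=> [[_ [le_b|ge_b]]|[le_b|ge_b]].
- by left; apply/forall_cV2_neq0 => c /le_b; rewrite !KqE; apply.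
- by right; apply/forall_cV2_neq0 => c /ge_b; rewrite !KqE; apply.
- by split=> //; left=> c; rewrite cV2_neq0 !KqE; apply: le_b.
- by split=> //; right=> c; rewrite cV2_neq0 !KqE; apply: ge_b.
Qed.


Lemma KEFG_Iform p :
  [/\ KE Om p = Iform Om p 0 0, KF Om p = Iform Om p 0 1 & KG Om p = Iform Om p 1 1].
Proof. by rewrite !Iform_entry. Qed.

Lemma KLMN_IIform p : [/\ KL Om x p = IIform Om x p 0 0,
  KM1 Om x p = IIform Om x p 0 1, KM2 Om x p = IIform Om x p 1 0
  & KN Om x p = IIform Om x p 1 1].
Proof. by rewrite !IIform_entry. Qed.

Lemma principal_eqE a t :
  principal_eq Om x Dl a t = 2 * principal_jacobian (a t) (bvec Dl a t).
Proof.
rewrite /principal_eq /principal_jacobian /C1 /C2 /C3 /kummer_mx /bvec /=.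
have [-> -> ->] := KEFG_Iform (a t).
have [-> -> -> ->] := KLMN_IIform (a t).
move: (Iform Om (a t)) (IIform Om x (a t)) (Dl (a t)) (derive1 a t) => I II D v.
by rewrite !mulmx2E adj_mx2 !mxE /= /qform_jacobian; field.
Qed.

Lemma principal_eq_normalE a t : let p := a t in let b := bvec Dl a t in
  principal_eq_normal Om x Dl a t = principal_jacobian p b
    + (kummer_mx p 1 0 - kummer_mx p 0 1) / 2 * (b^T *m Iform Om p *m b) 0 0.
Proof.
have vD : derive1 a t *m Dl (a t) = (bvec Dl a t)^T by rewrite trmx_mul !trmxK.
rewrite /principal_eq_normal /principal_jacobian /kummer_mx /= vD -mulmxA -/(bvec _ _ _).
have := Iform_sym (a t).
move: (Iform Om (a t)) (IIform Om x (a t)) (Dl (a t)) (bvec Dl a t) => I II D b I_sym.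
by rewrite !adj_mx2 /Pmx !mulmx2E !mxE /= I_sym /qform_jacobian; field.
Qed.

Lemma kummer_principal_line_iff (I : set R) a :
  (forall t, I t -> \rank (Om (a t)) = 2%N) ->
  kummer_principal_line I Om x Dl a <->
  (forall t, I t -> principal_jacobian (a t) (bvec Dl a t) = 0).
Proof.
move=> Om_rank; split=> line t It.
- have [->|b_neq0] := eqVneq (bvec Dl a t) 0; first exact: principal_jacobian0.
  exact/(kummer_principal_direction_iff (Om_rank t It) b_neq0)/line.
- by move=> b_neq0; apply/(kummer_principal_direction_iff (Om_rank t It) b_neq0)/line.
Qed.

End KummerForms.

Theorem proposition4p4 (R : realType) (U : set 'rV[R]_2)
  (x xi : 'rV[R]_2 -> 'cV[R]_3) (Om : 'rV[R]_2 -> 'M[R]_(3, 2))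
  (Dl : 'rV[R]_2 -> 'M[R]_2) :
  open U -> smooth_on U x ->
  (forall p, U p -> dot (xi p) (xi p) = 1) ->
  proper_frontal U xi ->
  tangent_moving_basis U xi Om ->
  (forall p, U p -> jac xi p = Om p *m (Dl p)^T) ->
  forall (I : set R) (a : R -> 'rV[R]_2),
    open I -> smooth_curve_on I a -> (forall t, I t -> U (a t)) ->
    (kummer_principal_line I Om x Dl a <->
       (forall t, I t -> principal_eq Om x Dl a t = 0)) /\
    (normal_congruence U Om x Dl ->
       (kummer_principal_line I Om x Dl a <->
          (forall t, I t -> principal_eq_normal Om x Dl a t = 0))).
Proof.
move=> _ _ _ _ [_ Om_basis] _ I a _ _ aU.
have Om_rank t : I t -> \rank (Om (a t)) = 2%N.
  by move=> It; have [] := Om_basis _ (aU t It).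
rewrite (kummer_principal_line_iff x Dl Om_rank); split.
  split=> eq0 t It; first by rewrite principal_eqE eq0 ?mulr0.
  by have /eqP := eq0 t It; rewrite principal_eqE mulf_eq0 pnatr_eq0 => /eqP.
move=> normal.
have skew0 t : I t -> kummer_mx Om x Dl (a t) 1 0 = kummer_mx Om x Dl (a t) 0 1.
  move=> It; have := congr1 (fun M : 'M[R]_2 => M 0 1) (normal _ (aU t It)).
  by rewrite /= mxE.
by split=> eq0 t It; have := eq0 t It;
  rewrite principal_eq_normalE /= skew0 // subrr !mul0r addr0.
Qed.
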